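(* There exists a random coverage collaborative learning problem with strategy space $\Theta=\mathbb{R}_+^k$ whose set of envy-free equilibria is non-convex.
   Context: Random coverage: finite domain $\mathcal{X}$; agent $i$ has a distribution $(q_{ix})_{x\in\mathcal{X}}$ on $\mathcal{X}$. For integer sample counts ${\bf m}$, $U_i({\bf m})=1-\frac12\sum_{x\in\mathcal{X}}q_{ix}\prod_{j=1}^k(1-q_{jx})^{m_j}$; for real ${\boldsymbol\theta}\in\mathbb{R}_+^k$, $u_i({\boldsymbol\theta})=\mathbb{E}[U_i({\bf m})]$ where the $m_j$ are independent with $m_j=\lfloor\theta_j\rfloor+\mathrm{Bernoulli}(\theta_j-\lfloor\theta_j\rfloor)$. Each agent has a threshold $\mu_i$; ${\boldsymbol\theta}$ is feasible if $u_i({\boldsymbol\theta})\ge\mu_i$ for all $i$. A feasible ${\boldsymbol\theta}$ is an envy-free equilibrium if there are no $i,j$ with $\theta_j<\theta_i$ and $u_i({\boldsymbol\theta}^{(i,j)})\ge\mu_i$, where ${\boldsymbol\theta}^{(i,j)}$ is ${\boldsymbol\theta}$ with entries $i$ and $j$ swapped. *)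

From mathcomp Require Import all_boot all_order all_algebra all_fingroup.
From mathcomp Require Import reals.
Set Implicit Arguments. Unset Strict Implicit. Unset Printing Implicit Defensive.
Import Order.TTheory GRing.Theory Num.Theory.
Local Open Scope ring_scope.

Section RandomCoverage.
Variables (R : realType) (k n : nat).
(* Domain X = 'I_n ; agents 'I_k ; q i x = q_{ix}. *)
Variable q : 'I_k -> 'I_n -> R.

Definition is_distribution : Prop :=
  (forall i x, 0 <= q i x) /\ (forall i, \sum_(x < n) q i x = 1).

Definition Ucov (i : 'I_k) (m : 'I_k -> nat) : R :=
  1 - 2^-1 * \sum_(x < n) q i x * \prod_(j < k) (1 - q j x) ^+ (m j).

(* fractional part, for theta >= 0 : theta - floor theta *)
Definition fracp (t : R) : R := t - (Num.truncn t)%:R.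

(* u_i(theta) = E[U_i(m)], m_j = floor theta_j + Bernoulli(frac theta_j)
   independent; expectation written as the finite sum over outcomes b. *)
Definition ucov (i : 'I_k) (theta : 'I_k -> R) : R :=
  \sum_(b : {ffun 'I_k -> bool})
     (\prod_(j < k) (if b j then fracp (theta j) else 1 - fracp (theta j)))
     * Ucov i (fun j => (Num.truncn (theta j) + b j)%N).

Variable mu : 'I_k -> R.

Definition in_strategy_space (theta : 'I_k -> R) : Prop :=
  forall j, 0 <= theta j.

Definition feasible (theta : 'I_k -> R) : Prop :=
  forall i, mu i <= ucov i theta.

Definition swap (theta : 'I_k -> R) (i j : 'I_k) : 'I_k -> R :=
  fun l => theta (tperm i j l).

Definition envy_free_eq (theta : 'I_k -> R) : Prop :=
  in_strategy_space theta /\ feasible theta /\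
  ~ (exists i j, theta j < theta i /\ mu i <= ucov i (swap theta i j)).

Definition convex_set (S : ('I_k -> R) -> Prop) : Prop :=
  forall t1 t2 (l : R), S t1 -> S t2 -> 0 <= l <= 1 ->
    S (fun j => l * t1 j + (1 - l) * t2 j).

End RandomCoverage.

From mathcomp Require Import all_boot all_order all_algebra all_fingroup.
From mathcomp Require Import reals lra.
Set Implicit Arguments.
Unset Strict Implicit.
Unset Printing Implicit Defensive.
Import Order.TTheory GRing.Theory Num.Theory.
Local Open Scope ring_scope.

(* Give each of two agents the point mass on its own point of a two-point
   domain.  At an integral profile an agent's utility is then 1/2 if it holds
   no sample and 1 otherwise.  With thresholds (1/2, 1) the profiles (0, 2)
   and (2, 2) are envy-free equilibria, but at their midpoint (1, 2) agent 1
   still meets its threshold after swapping with agent 0, so it envies it. *)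

Section IntegralProfiles.
Variables (R : realType) (k n : nat) (q : 'I_k -> 'I_n -> R).

Lemma eq_Ucov i (m1 m2 : 'I_k -> nat) : m1 =1 m2 -> Ucov q i m1 = Ucov q i m2.
Proof.
move=> eq_m; rewrite /Ucov; congr (_ - _ * _); apply: eq_bigr => x _.
by congr (_ * _); apply: eq_bigr => j _; rewrite eq_m.
Qed.

(* All fractional parts vanish, so only the outcome [b = false] has weight. *)
Lemma ucov_nat i theta (f : 'I_k -> nat) :
  (forall j, theta j = (f j)%:R) -> ucov q i theta = Ucov q i f.
Proof.
move=> thetaE; have fracp0 j : fracp (theta j) = 0 by rewrite /fracp thetaE natrK subrr.
rewrite /ucov (bigD1 [ffun=> false]) //= [X in _ + X]big1 ?addr0 => [|b b_neq0].
  rewrite big1 ?mul1r => [|j _]; last by rewrite ffunE fracp0 subr0.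
  by apply: eq_Ucov => j; rewrite ffunE thetaE natrK addn0.
have [j bj] : exists j, b j.
  apply/existsP; apply: contraNT b_neq0; rewrite negb_exists => /forallP bF.
  by apply/eqP/ffunP => j; rewrite ffunE; apply/negbTE/bF.
by rewrite (bigD1 j) //= bj fracp0 !mul0r.
Qed.

End IntegralProfiles.

Section PointMasses.
Variables (R : realType) (k : nat).

Definition point_mass (i x : 'I_k) : R := (i == x)%:R.

Definition sample_payoff (s : nat) : R := if s == 0%N then 2^-1 else 1.

Lemma point_mass_distribution : is_distribution point_mass.
Proof.
split=> [i x|i]; first exact: ler0n.
rewrite (bigD1 i) //= big1 ?addr0 => [|x /negbTE]; first by rewrite /point_mass eqxx.
by rewrite /point_mass eq_sym => ->.
Qed.

Lemma Ucov_point_mass i (m : 'I_k -> nat) : Ucov point_mass i m = sample_payoff (m i).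
Proof.
rewrite /Ucov (bigD1 i) //= [X in _ * (_ + X)]big1 ?addr0 => [|x /negbTE]; last first.
  by rewrite /point_mass eq_sym => ->; rewrite mul0r.
rewrite /point_mass eqxx mul1r (bigD1 i) //= big1 ?mulr1 => [|j /negbTE ->]; last first.
  by rewrite subr0 expr1n.
rewrite eqxx subrr expr0n /sample_payoff; case: eqP => _ /=; last by rewrite mulr0 subr0.
by rewrite mulr1; lra.
Qed.

Lemma envy_free_point_mass_nat (mu : 'I_k -> R) theta (f : 'I_k -> nat) :
  (forall j, theta j = (f j)%:R) ->
  envy_free_eq point_mass mu theta <->
  (forall i, mu i <= sample_payoff (f i)) /\
  (forall i j, (f j < f i)%N -> sample_payoff (f j) < mu i).
Proof.
move=> thetaE.
have uE i : ucov point_mass i theta = sample_payoff (f i).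
  by rewrite (ucov_nat _ _ thetaE) Ucov_point_mass.
have swapE i j : ucov point_mass i (swap theta i j) = sample_payoff (f j).
  by rewrite (ucov_nat _ _ (fun l => thetaE (tperm i j l))) Ucov_point_mass tpermL.
split=> [[_ [feas no_envy]]|[feas no_envy]].
  split=> [i|i j lt_ji]; first by rewrite -uE.
  rewrite ltNge; apply/negP => le_mu; apply: no_envy; exists i, j.
  by rewrite !thetaE ltr_nat swapE.
split=> [j|]; first by rewrite thetaE.
split=> [i|[i [j []]]]; first by rewrite uE.
by rewrite !thetaE ltr_nat swapE => /no_envy; rewrite ltNge => /negP.
Qed.

End PointMasses.

Arguments point_mass {R k} i x.
Arguments sample_payoff {R} s.

Section TwoAgents.
Variable R : realType.

Definition threshold (i : 'I_2) : R := if i == ord0 then 2^-1 else 1.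

Definition profile (a : nat) (j : 'I_2) : nat := if j == ord0 then a else 2.

Lemma threshold_unit i : 0 <= threshold i <= 1.
Proof. by rewrite /threshold; case: ifP; lra. Qed.

Lemma envy_free_profile a theta :
  (forall j, theta j = (profile a j)%:R) ->
  envy_free_eq point_mass threshold theta <-> (a == 0%N) || (a == 2%N).
Proof.
move=> /envy_free_point_mass_nat ->; rewrite /sample_payoff /threshold /profile /=.
split=> [[_ no_envy]|/orP[]/eqP->].
- case: a no_envy => [|[|[|a]]] // no_envy.
    by have := no_envy ord_max ord0 isT; rewrite ltxx.
  by have := no_envy ord0 ord_max isT => /=; lra.
all: by split=> [[[|[|i]] ?]|[[|[|i]] ?] [[|[|j]] ?]] //= => *; lra.
Qed.

End TwoAgents.

Theorem theorem9 (R : realType) :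
  exists (k n : nat) (q : 'I_k -> 'I_n -> R) (mu : 'I_k -> R),
    is_distribution q /\ (forall i, 0 <= mu i <= 1) /\
    ~ convex_set (envy_free_eq q mu).
Proof.
exists 2%N, 2%N, point_mass, (threshold R).
split; first apply: point_mass_distribution.
split; first apply: threshold_unit.
have envy_free a : (a == 0%N) || (a == 2%N) ->
    envy_free_eq point_mass (threshold R) (fun j => (profile a j)%:R).
  by move=> a02; apply/(envy_free_profile (fun j => erefl)).
have half_unit : 0 <= (2^-1 : R) <= 1 by lra.
move=> /(_ _ _ _ (envy_free 0%N isT) (envy_free 2%N isT) half_unit).
rewrite (envy_free_profile (a := 1)) // => j.
by rewrite /profile; case: ifP => _; lra.
Qed.
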